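(* Let $a\in(-1,0)$ and let $f:\mathbb{R}\to\mathbb{R}$ be a smooth odd function, $f(-x_1)=-f(x_1)$, with $f(x_1)\neq 0$ for all $x_1\in[-2\sqrt{3}/9,\,0)$. For $\alpha\in\mathbb{R}$ consider the planar system $$\frac{dx_1}{dt}=F_1(x;\alpha)=a x_1+x_2+\tfrac32 a x_1x_2+\tfrac32 x_2^2+\alpha f(x_1),\qquad \frac{dx_2}{dt}=F_2(x)=x_1+a x_2+a x_2^2 .$$ Then, as $\alpha$ is varied in a neighbourhood of $0$, this system undergoes a supercritical homoclinic bifurcation in a generic way, i.e. at $\alpha=0$ the following hold: (i) the origin is a saddle fixed point with Jacobian eigenvalues $\lambda_1(0)<0<\lambda_2(0)$; (ii) there is a homoclinic orbit $\gamma^*$ to the origin (namely the alpha loop $\{(x_1,x_2): -x_1^2+x_2^2(1+x_2)=0,\ x_2<0\}$); (iii) the saddle quantity $\sigma_0=\lambda_1(0)+\lambda_2(0)$ is nonzero, and in fact $\sigma_0<0$; (iv) the Melnikov integral $$M(0)=\int_{-\infty}^{+\infty}\varphi(t)\Big(F_1\frac{\partial F_2}{\partial\alpha}-F_2\frac{\partial F_1}{\partial\alpha}\Big)\Big|_{x=x(t),\,\alpha=0}\,dt,\qquad \varphi(t)=\exp\Big(-\int_0^t (\nabla\cdot F)(x(\tau);0)\,d\tau\Big),$$ evaluated along the homoclinic orbit $x(t)$ (parametrised so that $x(0)=(0,-1)$), is nonzero.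
   Context: A homoclinic orbit to a fixed point $x^*$ is an orbit whose $\alpha$-limit and $\omega$-limit sets both equal $\{x^*\}$. Conditions (i)–(iv) are the bifurcation and genericity conditions of the Andronov–Leontovich theorem; when they hold, for all sufficiently small $|\alpha|$ a unique limit cycle bifurcates from $\gamma^*$ in a neighbourhood of the saddle and the homoclinic orbit, and the bifurcation is called supercritical when $\sigma_0<0$ (the bifurcating limit cycle is then stable). *)

From Stdlib Require Import Reals.
From Coquelicot Require Import Coquelicot.
Open Scope R_scope.

Definition F1 (a : R) (f : R -> R) (alpha x1 x2 : R) : R :=
  a * x1 + x2 + 3/2 * a * x1 * x2 + 3/2 * x2 ^ 2 + alpha * f x1.
Definition F2 (a : R) (x1 x2 : R) : R :=
  x1 + a * x2 + a * x2 ^ 2.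

Definition smooth (f : R -> R) : Prop := forall (n : nat) (x : R), ex_derive_n f n x.

Definition J11 a f alpha x1 x2 := Derive (fun y => F1 a f alpha y x2) x1.
Definition J12 a f alpha x1 x2 := Derive (fun y => F1 a f alpha x1 y) x2.
Definition J21 a (x1 x2 : R) := Derive (fun y => F2 a y x2) x1.
Definition J22 a (x1 x2 : R) := Derive (fun y => F2 a x1 y) x2.

Definition jac_eigenvalue a f alpha x1 x2 (lam : R) : Prop :=
  (J11 a f alpha x1 x2 - lam) * (J22 a x1 x2 - lam)
  - J12 a f alpha x1 x2 * J21 a x1 x2 = 0.

Definition divF a f alpha x1 x2 : R := J11 a f alpha x1 x2 + J22 a x1 x2.

Definition alpha_loop (p1 p2 : R) : Prop := - p1 ^ 2 + p2 ^ 2 * (1 + p2) = 0 /\ p2 < 0.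

(* The alpha loop is parametrised by x2 = s^2 - 1, x1 = s x2 with s in (-1, 1), and
   along it the unperturbed system reduces to s' = -(1 - s^2)(1 + a s)/2, solved by
   inverting a primitive of the separated equation; s decreases from 1 to -1, so the
   orbit is homoclinic to the saddle at the origin. Along it the Melnikov integrand is
   phi (1 - s^2)(1 + a s) s f(s^3 - s). As s^3 - s ranges over [-2√3/9, 2√3/9] and f is
   odd, continuous and nonvanishing on [-2√3/9, 0), the factor s f(s^3 - s) has the
   constant sign of f(-2√3/9), strictly so for t > 0; comparing with phi (1 ± s), which
   decay exponentially at ±∞, shows the integral converges, so it is nonzero. *)

From Stdlib Require Import Reals Lra Psatz Ranalysis5 Classical.
From Coquelicot Require Import Coquelicot.
Open Scope R_scope.

Lemma ex_derive_continuous_R (g : R -> R) x : ex_derive g x -> continuous g x.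
Proof. apply (ex_derive_continuous (K := R_AbsRing) (V := R_NormedModule)). Qed.

Lemma is_derive_nonpos_le (g dg : R -> R) x y :
  x <= y -> (forall t, is_derive g t (dg t)) ->
  (forall t, x <= t <= y -> dg t <= 0) -> g y <= g x.
Proof.
  intros hxy hg hneg.
  destruct (MVT_gen g x y dg) as [c [hc hmvt]].
  - intros t _; apply hg.
  - intros t _. apply continuity_pt_filterlim, ex_derive_continuous_R.
    eexists; apply hg.
  - rewrite Rmin_left, Rmax_right in hc by lra.
    pose proof (hneg c hc). nra.
Qed.

Lemma is_derive_RInt_continuous (g : R -> R) x t :
  (forall u, continuous g u) -> is_derive (RInt g x) t (g t).
Proof.
  intros hg. apply (is_derive_RInt g (RInt g x) x t); [| apply hg].
  apply filter_forall. intros b.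
  apply (RInt_correct (V := R_CompleteNormedModule)).
  apply (ex_RInt_continuous (V := R_CompleteNormedModule)). intros; apply hg.
Qed.

Lemma RInt_le_of_le_derive (g W dW : R -> R) x y :
  x <= y -> (forall t, continuous g t) -> (forall t, is_derive W t (dW t)) ->
  (forall t, x <= t <= y -> g t <= dW t) -> RInt g x y <= W y - W x.
Proof.
  intros hxy hg hW hle.
  assert (hG : forall t, is_derive (fun t => RInt g x t - W t) t (g t - dW t)).
  { intros t. apply (is_derive_minus (RInt g x) W).
    - apply is_derive_RInt_continuous, hg.
    - apply hW. }
  assert (hdecr : RInt g x y - W y <= RInt g x x - W x).
  { apply (is_derive_nonpos_le _ _ x y hxy hG).
    intros t ht. pose proof (hle t ht). lra. }
  rewrite (RInt_point (V := R_CompleteNormedModule)) in hdecr.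
  change (@zero R_CompleteNormedModule) with 0 in hdecr. lra.
Qed.

Lemma nondecreasing_bounded_is_lim_p_infty (K : R -> R) B :
  (forall x y, x <= y -> K x <= K y) -> (forall x, K x <= B) ->
  exists L : R, is_lim K p_infty L /\ forall x, K x <= L.
Proof.
  intros hmono hB.
  destruct (completeness (fun y => exists x, y = K x)) as [L [hub hlub]].
  - exists B. intros y [x ->]. apply hB.
  - exists (K 0), 0. reflexivity.
  - assert (hle : forall x, K x <= L) by (intros x; apply hub; exists x; reflexivity).
    exists L. split; [| exact hle].
    apply is_lim_spec. intros eps. simpl.
    assert (hx0 : exists x0, L - eps < K x0).
    { apply NNPP. intros hnot.
      assert (hub' : is_upper_bound (fun y => exists x, y = K x) (L - eps)).
      { intros y [x ->]. apply Rnot_lt_le. intros hlt. apply hnot. exists x; exact hlt. }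
      pose proof (hlub _ hub'). pose proof (cond_pos eps). lra. }
    destruct hx0 as [x0 hx0]. exists x0. intros x hx.
    pose proof (hmono x0 x (Rlt_le _ _ hx)). pose proof (hle x).
    rewrite Rabs_left1; lra.
Qed.

Lemma nondecreasing_bounded_is_lim_m_infty (K : R -> R) B :
  (forall x y, x <= y -> K x <= K y) -> (forall x, B <= K x) ->
  exists L : R, is_lim K m_infty L /\ forall x, L <= K x.
Proof.
  intros hmono hB.
  destruct (nondecreasing_bounded_is_lim_p_infty (fun x => - K (- x)) (- B))
    as [L [hlim hle]].
  - intros x y hxy. pose proof (hmono (- y) (- x) ltac:(lra)). lra.
  - intros x. pose proof (hB (- x)). lra.
  - exists (- L). split; [| intros x; pose proof (hle (- x)); rewrite Ropp_involutive in *; lra].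
    apply (is_lim_ext (fun x => - (- K (- (- x))))).
    { intros x. rewrite !Ropp_involutive. reflexivity. }
    apply (is_lim_opp (fun x => - K (- (- x))) m_infty L).
    apply (filterlim_comp _ _ _ Ropp (fun y => - K (- y)) _ (Rbar_locally p_infty));
      [| exact hlim].
    apply (is_lim_opp (fun x => x) m_infty m_infty), is_lim_id.
Qed.

Lemma RInt_sub_RInt0 (g : R -> R) x y :
  (forall t, continuous g t) -> RInt g x y = RInt g 0 y - RInt g 0 x.
Proof.
  intros hg.
  assert (hex : forall u v, ex_RInt g u v).
  { intros u v. apply (ex_RInt_continuous (V := R_CompleteNormedModule)). intros; apply hg. }
  pose proof (RInt_Chasles (V := R_CompleteNormedModule) g 0 x y (hex _ _) (hex _ _)) as hchasles.
  change plus with Rplus in hchasles. simpl in hchasles. lra.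
Qed.

Lemma is_RInt_gen_nonneg_of_tails (g : R -> R) lo hi B :
  (forall t, continuous g t) -> (forall t, 0 <= g t) ->
  (forall t, hi <= t -> RInt g hi t <= B) ->
  (forall t, t <= lo -> RInt g t lo <= B) ->
  exists M, is_RInt_gen g (Rbar_locally m_infty) (Rbar_locally p_infty) M /\
    forall x y, x <= y -> RInt g x y <= M.
Proof.
  intros hg hpos hhi hlo.
  set (G := RInt g 0).
  assert (hdiff : forall x y, RInt g x y = G y - G x) by (intros; apply RInt_sub_RInt0, hg).
  assert (hmono : forall x y, x <= y -> G x <= G y).
  { intros x y hxy. assert (0 <= RInt g x y); [| rewrite hdiff in *; lra].
    apply RInt_ge_0; auto.
    apply (ex_RInt_continuous (V := R_CompleteNormedModule)). intros; apply hg. }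
  assert (hB : 0 <= B).
  { specialize (hhi hi (Rle_refl _)).
    rewrite (RInt_point (V := R_CompleteNormedModule)) in hhi. exact hhi. }
  destruct (nondecreasing_bounded_is_lim_p_infty G (G hi + B) hmono) as [Lp [hLp hGLp]].
  { intros t. destruct (Rle_or_lt hi t) as [ht | ht].
    - pose proof (hhi t ht). rewrite hdiff in *. lra.
    - pose proof (hmono t hi (Rlt_le _ _ ht)). lra. }
  destruct (nondecreasing_bounded_is_lim_m_infty G (G lo - B) hmono) as [Lm [hLm hGLm]].
  { intros t. destruct (Rle_or_lt t lo) as [ht | ht].
    - pose proof (hlo t ht). rewrite hdiff in *. lra.
    - pose proof (hmono lo t (Rlt_le _ _ ht)). lra. }
  assert (hG : forall t, is_derive G t (g t)) by (intros; apply is_derive_RInt_continuous, hg).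
  exists (Lp - Lm). split.
  - apply (is_RInt_gen_ext (Derive G)).
    { apply filter_forall. intros ab x _. apply is_derive_unique, hG. }
    apply (is_RInt_gen_Derive G Lm Lp); [| | exact hLm | exact hLp];
      apply filter_forall; intros ab x _.
    + eexists; apply hG.
    + apply (continuous_ext g); [| apply hg].
      intros y. symmetry. apply is_derive_unique, hG.
  - intros x y _. rewrite hdiff. pose proof (hGLp y). pose proof (hGLm x). lra.
Qed.

Lemma continuity_no_root_mul_pos (g : R -> R) x y :
  x <= y -> continuity g -> (forall z, x <= z <= y -> g z <> 0) -> 0 < g x * g y.
Proof.
  intros hxy hg hroot.
  apply Rnot_le_lt. intros hle.
  assert (h0 : Rmin (g x) (g y) <= 0 <= Rmax (g x) (g y)).
  { unfold Rmin, Rmax. destruct (Rle_dec (g x) (g y)); split; nra. }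
  destruct (IVT_gen g x y 0 hg h0) as [z [hz hgz]].
  rewrite Rmin_left, Rmax_right in hz by lra.
  exact (hroot z hz hgz).
Qed.

Section Orbit.

Variable a : R.
Hypothesis ha : -1 < a < 0.

(* A primitive of [2 / ((1 - s^2)(1 + a s))], by partial fractions; [s t := tau^-1 (-t)]
   then solves [s' = -(1 - s^2)(1 + a s)/2]. *)
Definition tau (s : R) : R :=
  - ln (1 - s) / (1 + a) + ln (1 + s) / (1 - a) - 2 * a / (1 - a ^ 2) * ln (1 + a * s).

Definition dtau (s : R) : R := 2 / ((1 - s ^ 2) * (1 + a * s)).

Lemma is_derive_tau s : -1 < s < 1 -> is_derive tau s (dtau s).
Proof.
  intros hs. assert (0 < 1 + a * s) by nra.
  unfold tau, dtau. auto_derive.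
  - repeat split; lra.
  - field. repeat split; nra.
Qed.

Lemma continuity_pt_tau s : -1 < s < 1 -> continuity_pt tau s.
Proof.
  intros hs. apply continuity_pt_filterlim, ex_derive_continuous_R.
  eexists; apply is_derive_tau, hs.
Qed.

Lemma tau_lt x y : -1 < x -> x < y -> y < 1 -> tau x < tau y.
Proof.
  intros hx hxy hy.
  apply (incr_function tau (-1) 1 dtau); simpl; auto.
  - intros s h1 h2. apply is_derive_tau. lra.
  - intros s h1 h2. assert (0 < 1 + a * s) by nra.
    unfold dtau. apply Rdiv_lt_0_compat; [lra |]. apply Rmult_lt_0_compat; nra.
Qed.

Lemma tau0 : tau 0 = 0.
Proof. unfold tau. rewrite Rmult_0_r, Rplus_0_r, Rminus_0_r, ln_1. field. nra. Qed.

Lemma tau_le_left s :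
  -1 < s <= 0 -> tau s <= ln (1 + s) / (1 - a) - 2 * a / (1 - a ^ 2) * ln (1 - a).
Proof.
  intros hs. unfold tau.
  assert (0 <= ln (1 - s)) by (rewrite <- ln_1; apply ln_le; lra).
  assert (ln (1 + a * s) <= ln (1 - a)) by (apply ln_le; nra).
  assert (0 < - 2 * a / (1 - a ^ 2)) by (apply Rdiv_lt_0_compat; nra).
  assert (0 <= ln (1 - s) / (1 + a)) by (apply Rdiv_le_0_compat; lra).
  replace (2 * a / (1 - a ^ 2)) with (- (- 2 * a / (1 - a ^ 2))) by (field; nra).
  nra.
Qed.

Lemma tau_ge_right s :
  0 <= s < 1 -> - ln (1 - s) / (1 + a) - 2 * a / (1 - a ^ 2) * ln (1 + a) <= tau s.
Proof.
  intros hs. unfold tau.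
  assert (0 <= ln (1 + s)) by (rewrite <- ln_1; apply ln_le; lra).
  assert (ln (1 + a) <= ln (1 + a * s)) by (apply ln_le; nra).
  assert (0 < - 2 * a / (1 - a ^ 2)) by (apply Rdiv_lt_0_compat; nra).
  assert (0 <= ln (1 + s) / (1 - a)) by (apply Rdiv_le_0_compat; lra).
  replace (2 * a / (1 - a ^ 2)) with (- (- 2 * a / (1 - a ^ 2))) by (field; nra).
  nra.
Qed.

Lemma tau_surj y : {s : R | -1 < s < 1 /\ tau s = y}.
Proof.
  set (c := - 2 * a / (1 - a ^ 2)).
  set (lo := exp ((1 - a) * Rmin (-1) (y - c * ln (1 - a))) - 1).
  set (hi := 1 - exp (- (1 + a) * Rmax 1 (y - c * ln (1 + a)))).
  assert (hmin := Rmin_l (-1) (y - c * ln (1 - a))).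
  assert (hmax := Rmax_l 1 (y - c * ln (1 + a))).
  assert (hlo : -1 < lo < 0).
  { unfold lo. pose proof (exp_pos ((1 - a) * Rmin (-1) (y - c * ln (1 - a)))).
    assert (exp ((1 - a) * Rmin (-1) (y - c * ln (1 - a))) < exp 0)
      by (apply exp_increasing; nra).
    rewrite exp_0 in *. lra. }
  assert (hhi : 0 < hi < 1).
  { unfold hi. pose proof (exp_pos (- (1 + a) * Rmax 1 (y - c * ln (1 + a)))).
    assert (exp (- (1 + a) * Rmax 1 (y - c * ln (1 + a))) < exp 0)
      by (apply exp_increasing; nra).
    rewrite exp_0 in *. lra. }
  destruct (f_interv_is_interv tau lo hi y) as [s [hs hts]].
  - lra.
  - split.
    + pose proof (tau_le_left lo ltac:(lra)) as hb. fold c in hb.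
      replace (1 + lo) with (exp ((1 - a) * Rmin (-1) (y - c * ln (1 - a)))) in hb
        by (unfold lo; ring).
      rewrite ln_exp in hb.
      replace ((1 - a) * Rmin (-1) (y - c * ln (1 - a)) / (1 - a))
        with (Rmin (-1) (y - c * ln (1 - a))) in hb by (field; lra).
      pose proof (Rmin_r (-1) (y - c * ln (1 - a))). unfold c in *. lra.
    + pose proof (tau_ge_right hi ltac:(lra)) as hb. fold c in hb.
      replace (1 - hi) with (exp (- (1 + a) * Rmax 1 (y - c * ln (1 + a)))) in hb
        by (unfold hi; ring).
      rewrite ln_exp in hb.
      replace (- (- (1 + a) * Rmax 1 (y - c * ln (1 + a))) / (1 + a))
        with (Rmax 1 (y - c * ln (1 + a))) in hb by (field; lra).
      pose proof (Rmax_r 1 (y - c * ln (1 + a))). unfold c in *. lra.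
  - intros z hz. apply continuity_pt_tau. lra.
  - exists s. split; [lra | exact hts].
Qed.

Definition tau_inv (y : R) : R := proj1_sig (tau_surj y).

Lemma tau_inv_spec y : -1 < tau_inv y < 1 /\ tau (tau_inv y) = y.
Proof. unfold tau_inv. destruct (tau_surj y) as [s hs]. exact hs. Qed.

Lemma tau_inv_tau s : -1 < s < 1 -> tau_inv (tau s) = s.
Proof.
  intros hs. destruct (tau_inv_spec (tau s)) as [hb he].
  destruct (Rtotal_order (tau_inv (tau s)) s) as [h | [h | h]]; auto.
  - pose proof (tau_lt _ _ (proj1 hb) h (proj2 hs)). lra.
  - pose proof (tau_lt _ _ (proj1 hs) h (proj2 hb)). lra.
Qed.

Lemma tau_inv_lt x y : x < y -> tau_inv x < tau_inv y.
Proof.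
  intros hxy. destruct (tau_inv_spec x) as [hbx hx]. destruct (tau_inv_spec y) as [hby hy].
  destruct (Rtotal_order (tau_inv x) (tau_inv y)) as [h | [h | h]]; auto.
  - rewrite h in hx. lra.
  - pose proof (tau_lt _ _ (proj1 hby) h (proj2 hbx)). lra.
Qed.

Lemma tau_inv_le x y : x <= y -> tau_inv x <= tau_inv y.
Proof. intros [h | ->]; [apply Rlt_le, tau_inv_lt, h | apply Rle_refl]. Qed.

Lemma continuity_pt_tau_inv y : continuity_pt tau_inv y.
Proof.
  destruct (tau_inv_spec y) as [hb hy].
  set (lo := (tau_inv y - 1) / 2). set (hi := (tau_inv y + 1) / 2).
  assert (hlohi : -1 < lo /\ lo < tau_inv y < hi /\ hi < 1) by (unfold lo, hi; lra).
  apply (continuity_pt_recip_interv tau tau_inv lo hi).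
  - lra.
  - intros u v hu huv hv. apply tau_lt; lra.
  - intros x _ _. apply tau_inv_spec.
  - intros x hx1 hx2.
    split; [rewrite <- (tau_inv_tau lo) by lra | rewrite <- (tau_inv_tau hi) by lra];
      apply tau_inv_le; lra.
  - intros z hz. apply continuity_pt_tau. lra.
  - rewrite <- hy. split; apply tau_lt; lra.
Qed.

Lemma is_derive_tau_inv y : is_derive tau_inv y (1 / dtau (tau_inv y)).
Proof.
  apply is_derive_Reals.
  assert (hlt : tau_inv (y - 1) < tau_inv y < tau_inv (y + 1)) by (split; apply tau_inv_lt; lra).
  assert (hdom : forall z, tau_inv (y - 1) <= z <= tau_inv (y + 1) -> derivable_pt tau z).
  { intros z hz. exists (dtau z). apply is_derive_Reals, is_derive_tau.
    pose proof (tau_inv_spec (y - 1)). pose proof (tau_inv_spec (y + 1)). lra. }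
  assert (hmid : tau_inv (y - 1) <= tau_inv y <= tau_inv (y + 1)) by lra.
  assert (hder : derive_pt tau (tau_inv y) (hdom (tau_inv y) hmid) = dtau (tau_inv y)).
  { apply derive_pt_eq_0, is_derive_Reals, is_derive_tau, tau_inv_spec. }
  rewrite <- hder.
  apply (derivable_pt_lim_recip_interv tau tau_inv (y - 1) (y + 1) y hdom);
    [apply continuity_pt_tau_inv | lra | lra | intros x _; apply tau_inv_spec |].
  rewrite hder. destruct (tau_inv_spec y) as [hb _].
  assert (0 < 1 + a * tau_inv y) by nra.
  unfold dtau. apply Rgt_not_eq, Rdiv_lt_0_compat; [lra |]. apply Rmult_lt_0_compat; nra.
Qed.

Definition s (t : R) : R := tau_inv (- t).

Definition dsdt (u : R) : R := - ((1 - u ^ 2) * (1 + a * u)) / 2.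

Lemma s_bound t : -1 < s t < 1.
Proof. apply tau_inv_spec. Qed.

Lemma s_factors_pos t : 0 < 1 - s t ^ 2 /\ 0 < 1 + a * s t.
Proof. pose proof (s_bound t). split; nra. Qed.

Lemma is_derive_s t : is_derive s t (dsdt (s t)).
Proof.
  unfold s.
  pose proof (is_derive_comp tau_inv Ropp t _ _ (is_derive_tau_inv (- t))
    (is_derive_opp _ _ _ (is_derive_id t))) as hcomp.
  replace (dsdt (tau_inv (- t))) with (scal (opp one) (1 / dtau (tau_inv (- t)))); [exact hcomp |].
  destruct (tau_inv_spec (- t)) as [hb _]. set (u := tau_inv (- t)) in *.
  assert (0 < 1 + a * u) by nra.
  change (- 1 * (1 / dtau u) = dsdt u). unfold dtau, dsdt. field. split; nra.
Qed.

Lemma ex_derive_s t : ex_derive s t.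
Proof. eexists; apply is_derive_s. Qed.

Lemma Derive_s t : Derive (fun u => s u) t = dsdt (s t).
Proof. apply is_derive_unique, is_derive_s. Qed.

Lemma s0 : s 0 = 0.
Proof. unfold s. rewrite Ropp_0, <- tau0 at 1. apply tau_inv_tau. lra. Qed.

Lemma s_lt t1 t2 : t1 < t2 -> s t2 < s t1.
Proof. intros h. apply tau_inv_lt. lra. Qed.

Lemma s_neg t : 0 < t -> s t < 0.
Proof. intros ht. rewrite <- s0. apply s_lt, ht. Qed.

Lemma s_nonpos t : 0 <= t -> s t <= 0.
Proof. intros [ht | <-]; [apply Rlt_le, s_neg, ht | rewrite s0; apply Rle_refl]. Qed.

Lemma s_of_tau u : -1 < u < 1 -> s (- tau u) = u.
Proof. intros hu. unfold s. rewrite Ropp_involutive. apply tau_inv_tau, hu. Qed.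

Lemma is_lim_s_p_infty : is_lim s p_infty (-1).
Proof.
  apply is_lim_spec. intros eps. simpl.
  set (q := -1 + Rmin eps 1).
  assert (hq : 0 < Rmin eps 1 <= 1)
    by (split; [apply Rmin_glb_lt; [apply cond_pos | lra] | apply Rmin_r]).
  exists (- tau q). intros t ht.
  assert (s t < q) by (rewrite <- (s_of_tau q) by (unfold q; lra); apply s_lt, ht).
  pose proof (s_bound t). pose proof (Rmin_l eps 1).
  rewrite Rabs_pos_eq; unfold q in *; lra.
Qed.

Lemma is_lim_s_m_infty : is_lim s m_infty 1.
Proof.
  apply is_lim_spec. intros eps. simpl.
  set (q := 1 - Rmin eps 1).
  assert (hq : 0 < Rmin eps 1 <= 1)
    by (split; [apply Rmin_glb_lt; [apply cond_pos | lra] | apply Rmin_r]).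
  exists (- tau q). intros t ht.
  assert (q < s t) by (rewrite <- (s_of_tau q) by (unfold q; lra); apply s_lt, ht).
  pose proof (s_bound t). pose proof (Rmin_l eps 1).
  rewrite Rabs_left; unfold q in *; lra.
Qed.

Definition x1 (t : R) : R := s t ^ 3 - s t.
Definition x2 (t : R) : R := s t ^ 2 - 1.

Lemma is_derive_x1 f t : is_derive x1 t (F1 a f 0 (x1 t) (x2 t)).
Proof.
  unfold x1, x2, F1. auto_derive; [repeat split; apply ex_derive_s |].
  rewrite Derive_s. unfold dsdt. field.
Qed.

Lemma is_derive_x2 t : is_derive x2 t (F2 a (x1 t) (x2 t)).
Proof.
  unfold x1, x2, F2. auto_derive; [repeat split; apply ex_derive_s |].
  rewrite Derive_s. unfold dsdt. field.
Qed.

Lemma x1_0 : x1 0 = 0.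
Proof. unfold x1. rewrite s0. ring. Qed.

Lemma x2_0 : x2 0 = -1.
Proof. unfold x2. rewrite s0. ring. Qed.

Lemma is_lim_poly_s (P : R -> R) (x : Rbar) (l : R) :
  is_lim s x l -> (forall u, ex_derive P u) -> P l = 0 -> is_lim (fun t => P (s t)) x 0.
Proof.
  intros hs hP hl. rewrite <- hl.
  apply is_lim_comp_continuous; [exact hs | apply ex_derive_continuous_R, hP].
Qed.

Lemma is_lim_x1_p_infty : is_lim x1 p_infty 0.
Proof.
  apply (is_lim_poly_s (fun u => u ^ 3 - u) _ (-1)); [apply is_lim_s_p_infty | | ring].
  intros u. auto_derive. exact I.
Qed.

Lemma is_lim_x2_p_infty : is_lim x2 p_infty 0.
Proof.
  apply (is_lim_poly_s (fun u => u ^ 2 - 1) _ (-1)); [apply is_lim_s_p_infty | | ring].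
  intros u. auto_derive. exact I.
Qed.

Lemma is_lim_x1_m_infty : is_lim x1 m_infty 0.
Proof.
  apply (is_lim_poly_s (fun u => u ^ 3 - u) _ 1); [apply is_lim_s_m_infty | | ring].
  intros u. auto_derive. exact I.
Qed.

Lemma is_lim_x2_m_infty : is_lim x2 m_infty 0.
Proof.
  apply (is_lim_poly_s (fun u => u ^ 2 - 1) _ 1); [apply is_lim_s_m_infty | | ring].
  intros u. auto_derive. exact I.
Qed.

Lemma alpha_loop_orbit p1 p2 : alpha_loop p1 p2 <-> exists t, x1 t = p1 /\ x2 t = p2.
Proof.
  unfold alpha_loop. split.
  - intros [hloop hp2]. set (q := p1 / p2).
    assert (hq : q ^ 2 = 1 + p2).
    { unfold q. apply (Rmult_eq_reg_r (p2 ^ 2)); [| nra].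
      field_simplify; [nra | lra]. }
    exists (- tau q). unfold x1, x2. rewrite s_of_tau by nra.
    split; [| lra].
    replace (q ^ 3 - q) with (q * (q ^ 2 - 1)) by ring. rewrite hq.
    unfold q. field. lra.
  - intros [t [<- <-]]. unfold x1, x2. pose proof (s_bound t).
    split; [ring | nra].
Qed.

End Orbit.

Lemma J11_alpha0 a f p1 p2 : J11 a f 0 p1 p2 = a + 3/2 * a * p2.
Proof.
  unfold J11, F1.
  rewrite (Derive_ext _ (fun y => a * y + p2 + 3/2 * a * y * p2 + 3/2 * p2 ^ 2))
    by (intros; ring).
  apply is_derive_unique. auto_derive; auto; field.
Qed.

Lemma J12_alpha0 a f p1 p2 : J12 a f 0 p1 p2 = 1 + 3/2 * a * p1 + 3 * p2.
Proof.
  unfold J12, F1.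
  rewrite (Derive_ext _ (fun y => a * p1 + y + 3/2 * a * p1 * y + 3/2 * y ^ 2))
    by (intros; ring).
  apply is_derive_unique. auto_derive; auto; field.
Qed.

Lemma J21_eq a p1 p2 : J21 a p1 p2 = 1.
Proof. unfold J21, F2. apply is_derive_unique. auto_derive; auto; ring. Qed.

Lemma J22_eq a p1 p2 : J22 a p1 p2 = a + 2 * a * p2.
Proof. unfold J22, F2. apply is_derive_unique. auto_derive; auto; ring. Qed.

Lemma divF_alpha0 a f p1 p2 : divF a f 0 p1 p2 = 2 * a + 7/2 * a * p2.
Proof. unfold divF. rewrite J11_alpha0, J22_eq. field. Qed.

Lemma Derive_F1_alpha a f p1 p2 : Derive (fun al => F1 a f al p1 p2) 0 = f p1.
Proof. unfold F1. apply is_derive_unique. auto_derive; auto. ring. Qed.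

Lemma Derive_F2_alpha a p1 p2 : Derive (fun _ : R => F2 a p1 p2) 0 = 0.
Proof. apply Derive_const. Qed.

Lemma jac_eigenvalue_origin a f lam :
  jac_eigenvalue a f 0 0 0 lam <-> (lam - (a - 1)) * (lam - (a + 1)) = 0.
Proof.
  unfold jac_eigenvalue. rewrite J11_alpha0, J12_alpha0, J21_eq, J22_eq.
  match goal with |- (?X = 0 <-> _) =>
    replace X with ((lam - (a - 1)) * (lam - (a + 1))) by ring end.
  reflexivity.
Qed.

Definition cc : R := 2 * sqrt 3 / 9.

Lemma cc_pos : 0 < cc.
Proof. unfold cc. pose proof (sqrt_lt_R0 3 ltac:(lra)). lra. Qed.

(* [cc] is the maximum of [|u^3 - u|] on [[-1, 1]], attained at [u = ±1/√3]. *)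
Lemma Rabs_cubic_le u : -1 <= u <= 1 -> Rabs (u ^ 3 - u) <= cc.
Proof.
  intros hu. rewrite <- (Rabs_pos_eq cc) by (apply Rlt_le, cc_pos).
  apply Rsqr_le_abs_0. unfold Rsqr.
  assert (hcc : cc * cc = 4 / 27) by (unfold cc; pose proof (sqrt_sqrt 3 ltac:(lra)); nra).
  rewrite hcc.
  assert (0 <= (u ^ 2 - 1/3) ^ 2 * (4/3 - u ^ 2))
    by (apply Rmult_le_pos; [apply pow2_ge_0 | nra]).
  nra.
Qed.

Section Melnikov.

Variable a : R.
Variable f : R -> R.
Hypothesis ha : -1 < a < 0.
Hypothesis hsmooth : smooth f.
Hypothesis hodd : forall x, f (- x) = - f x.
Hypothesis hnz : forall x, - (2 * sqrt 3 / 9) <= x < 0 -> f x <> 0.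

Local Notation s := (s a ha).
Local Notation x1 := (x1 a ha).
Local Notation x2 := (x2 a ha).

Lemma ex_derive_f x : ex_derive f x.
Proof. exact (hsmooth 1%nat x). Qed.

Lemma continuity_f : continuity f.
Proof. intros x. apply continuity_pt_filterlim, ex_derive_continuous_R, ex_derive_f. Qed.

Lemma f0 : f 0 = 0.
Proof. pose proof (hodd 0). rewrite Ropp_0 in *. lra. Qed.

Definition f_cc : R := f (- cc).

Lemma f_cc_mul_pos y : - cc <= y < 0 -> 0 < f_cc * f y.
Proof.
  intros hy. apply (continuity_no_root_mul_pos f (- cc) y); [lra | apply continuity_f |].
  intros z hz. apply hnz. fold cc. lra.
Qed.

Lemma f_cc_mul_nonneg y : - cc <= y <= 0 -> 0 <= f_cc * f y.
Proof.
  intros [hy [hlt | ->]]; [apply Rlt_le, f_cc_mul_pos; lra |].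
  rewrite f0. lra.
Qed.

(* Oddness of [f] folds both halves of the loop onto [x1 <= 0]. *)
Lemma mul_f_cubic u :
  -1 <= u <= 1 -> u * f (u ^ 3 - u) = Rabs u * f (- Rabs (u ^ 3 - u)).
Proof.
  intros hu. destruct (Rle_or_lt 0 u) as [h | h].
  - rewrite (Rabs_pos_eq u), (Rabs_left1 (u ^ 3 - u)) by nra.
    rewrite Ropp_involutive. reflexivity.
  - rewrite (Rabs_left u), (Rabs_pos_eq (u ^ 3 - u)), hodd by nra. ring.
Qed.

Definition div_orbit (t : R) : R := 2 * a + 7/2 * a * x2 t.

Definition phi (t : R) : R := exp (- RInt div_orbit 0 t).

Definition mel (t : R) : R :=
  phi t * ((1 - s t ^ 2) * (1 + a * s t)) * (s t * f (x1 t)).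

Lemma continuous_div_orbit t : continuous div_orbit t.
Proof.
  apply ex_derive_continuous_R. unfold div_orbit.
  apply (ex_derive_plus (fun _ => 2 * a)); [apply ex_derive_const |].
  apply ex_derive_scal. eexists; apply is_derive_x2.
Qed.

Lemma is_derive_phi t : is_derive phi t (- div_orbit t * phi t).
Proof.
  unfold phi.
  exact (is_derive_comp exp (fun t => - RInt div_orbit 0 t) t _ _ (is_derive_exp _)
    (is_derive_opp _ _ _ (is_derive_RInt_continuous _ 0 t continuous_div_orbit))).
Qed.

Lemma phi_pos t : 0 < phi t.
Proof. apply exp_pos. Qed.

Lemma f_cc_mel_eq t :
  f_cc * mel t =
  phi t * ((1 - s t ^ 2) * (1 + a * s t)) * (Rabs (s t) * (f_cc * f (- Rabs (x1 t)))).
Proof.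
  unfold mel, x1. pose proof (s_bound a ha t).
  rewrite mul_f_cubic by lra. ring.
Qed.

Lemma orbit_weight_pos t : 0 < phi t * ((1 - s t ^ 2) * (1 + a * s t)).
Proof.
  destruct (s_factors_pos a ha t).
  apply Rmult_lt_0_compat; [apply phi_pos | apply Rmult_lt_0_compat; assumption].
Qed.

Lemma x1_range t : - cc <= - Rabs (x1 t) <= 0.
Proof.
  pose proof (Rabs_pos (x1 t)). pose proof (s_bound a ha t).
  assert (Rabs (x1 t) <= cc) by (apply Rabs_cubic_le; lra). lra.
Qed.

Lemma f_cc_mel_nonneg t : 0 <= f_cc * mel t.
Proof.
  rewrite f_cc_mel_eq. pose proof (orbit_weight_pos t).
  pose proof (f_cc_mul_nonneg _ (x1_range t)). pose proof (Rabs_pos (s t)).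
  apply Rmult_le_pos; [lra |]. apply Rmult_le_pos; lra.
Qed.

Lemma f_cc_mel_pos t : 0 < t -> 0 < f_cc * mel t.
Proof.
  intros ht. rewrite f_cc_mel_eq. pose proof (orbit_weight_pos t).
  pose proof (s_neg a ha t ht) as hs.
  assert (0 < x1 t).
  { unfold x1. replace (s t ^ 3 - s t) with (- s t * (1 - s t ^ 2)) by ring.
    apply Rmult_lt_0_compat; [lra | apply s_factors_pos]. }
  rewrite (Rabs_pos_eq (x1 t)) by lra.
  assert (0 < f_cc * f (- x1 t)).
  { apply f_cc_mul_pos. pose proof (x1_range t). rewrite Rabs_pos_eq in * by lra. lra. }
  apply Rmult_lt_0_compat; [lra |].
  apply Rmult_lt_0_compat; [apply Rabs_pos_lt |]; lra.
Qed.

Lemma ex_derive_phi t : ex_derive phi t.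
Proof. eexists; apply is_derive_phi. Qed.

Lemma Derive_phi t : Derive (fun u => phi u) t = - div_orbit t * phi t.
Proof. apply is_derive_unique, is_derive_phi. Qed.

Lemma continuous_f_cc_mel t : continuous (fun t => f_cc * mel t) t.
Proof.
  apply ex_derive_continuous_R. unfold mel, x1. auto_derive.
  repeat match goal with
  | |- _ /\ _ => split
  | |- True => exact I
  | |- ex_derive (fun x => phi x) _ => apply ex_derive_phi
  | |- ex_derive (fun x => s x) _ => apply ex_derive_s
  | |- ex_derive (fun x => f x) _ => apply ex_derive_f
  end.
Qed.

(* Up to a constant, [phi (1 + s)] and [phi (1 - s)] dominate the Melnikov integrand,
   and their logarithmic derivatives stay below [-(1 + a)/2] for [t >= 0] and above
   [1/2] for [t <= T0]: they play the role of Lyapunov functions on the two tails. *)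
Definition psi (t : R) : R := phi t * (1 + s t).
Definition chi (t : R) : R := phi t * (1 - s t).

Lemma is_derive_psi t :
  is_derive psi t (psi t * (- div_orbit t - (1 - s t) * (1 + a * s t) / 2)).
Proof.
  unfold psi. auto_derive.
  - split; [apply ex_derive_phi | split; [apply ex_derive_s | exact I]].
  - rewrite Derive_s, Derive_phi. unfold dsdt. field.
Qed.

Lemma is_derive_chi t :
  is_derive chi t (chi t * (- div_orbit t + (1 + s t) * (1 + a * s t) / 2)).
Proof.
  unfold chi. auto_derive.
  - split; [apply ex_derive_phi | split; [apply ex_derive_s | exact I]].
  - rewrite Derive_s, Derive_phi. unfold dsdt. field.
Qed.

Lemma psi_nonneg t : 0 <= psi t.
Proof. pose proof (phi_pos t). pose proof (s_bound a ha t). unfold psi. nra. Qed.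

Lemma chi_nonneg t : 0 <= chi t.
Proof. pose proof (phi_pos t). pose proof (s_bound a ha t). unfold chi. nra. Qed.

Lemma psi_rate_le t :
  0 <= t -> - div_orbit t - (1 - s t) * (1 + a * s t) / 2 <= - ((1 + a) / 2).
Proof.
  intros ht. pose proof (s_nonpos a ha t ht). pose proof (s_bound a ha t). unfold div_orbit, x2.
  set (u := s t) in *. clearbody u.
  assert (0 <= - a * (- u * (u + 1))) by (apply Rmult_le_pos; nra).
  nra.
Qed.

Definition T0 : R := - tau a (9/10).

Lemma s_ge_T0 t : t <= T0 -> 9/10 <= s t.
Proof.
  intros ht. rewrite <- (s_of_tau a ha (9/10)) by lra. fold T0.
  destruct ht as [ht | ->]; [apply Rlt_le, s_lt, ht | apply Rle_refl].
Qed.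

Lemma chi_rate_ge t :
  t <= T0 -> 1/2 <= - div_orbit t + (1 + s t) * (1 + a * s t) / 2.
Proof.
  intros ht. pose proof (s_ge_T0 t ht). pose proof (s_bound a ha t).
  unfold div_orbit, x2. set (u := s t) in *. clearbody u.
  assert (- 6 * u ^ 2 + u + 3 <= 0) by nra.
  nra.
Qed.

Section Bound.

Variable B : R.
Hypothesis hB : forall y, - cc <= y <= 0 -> f_cc * f y <= B.

Lemma B_nonneg : 0 <= B.
Proof.
  pose proof cc_pos. specialize (hB (- cc) ltac:(lra)). unfold f_cc in *. nra.
Qed.

Lemma f_cc_mel_le t : f_cc * mel t <= B * (phi t * ((1 - s t ^ 2) * (1 + a * s t))).
Proof.
  rewrite f_cc_mel_eq. pose proof (orbit_weight_pos t). pose proof (x1_range t).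
  pose proof (f_cc_mul_nonneg _ (x1_range t)). pose proof (hB _ (x1_range t)).
  pose proof (s_bound a ha t).
  assert (Rabs (s t) <= 1) by (apply Rabs_le; lra).
  pose proof (Rabs_pos (s t)).
  set (w := phi t * ((1 - s t ^ 2) * (1 + a * s t))) in *.
  set (v := f_cc * f (- Rabs (x1 t))) in *.
  clearbody w v. rewrite (Rmult_comm B).
  apply Rmult_le_compat_l; [lra | nra].
Qed.

Lemma f_cc_mel_le_psi t : f_cc * mel t <= 4 * B * psi t.
Proof.
  pose proof (f_cc_mel_le t). pose proof (phi_pos t). pose proof B_nonneg.
  pose proof (s_bound a ha t). unfold psi.
  set (u := s t) in *. set (p := phi t) in *. clearbody u p.
  assert ((1 - u ^ 2) * (1 + a * u) <= 4 * (1 + u)).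
  { replace (1 - u ^ 2) with ((1 + u) * (1 - u)) by ring.
    assert ((1 - u) * (1 + a * u) <= 4) by nra. nra. }
  assert (0 <= B * p) by nra.
  nra.
Qed.

Lemma f_cc_mel_le_chi t : f_cc * mel t <= 4 * B * chi t.
Proof.
  pose proof (f_cc_mel_le t). pose proof (phi_pos t). pose proof B_nonneg.
  pose proof (s_bound a ha t). unfold chi.
  set (u := s t) in *. set (p := phi t) in *. clearbody u p.
  assert ((1 - u ^ 2) * (1 + a * u) <= 4 * (1 - u)).
  { replace (1 - u ^ 2) with ((1 + u) * (1 - u)) by ring.
    assert ((1 + u) * (1 + a * u) <= 4) by nra. nra. }
  assert (0 <= B * p) by nra.
  nra.
Qed.

Lemma RInt_f_cc_mel_right t :
  0 <= t -> RInt (fun t => f_cc * mel t) 0 t <= 8 * B / (1 + a) * psi 0.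
Proof.
  intros ht. set (c := 8 * B / (1 + a)).
  assert (hc : 0 <= c) by (apply Rdiv_le_0_compat; [pose proof B_nonneg |]; lra).
  eapply Rle_trans.
  - apply (RInt_le_of_le_derive _ (fun t => - c * psi t)
      (fun t => - c * (psi t * (- div_orbit t - (1 - s t) * (1 + a * s t) / 2))));
      [exact ht | apply continuous_f_cc_mel | |].
    + intros u. apply is_derive_scal, is_derive_psi.
    + intros u hu. cbv beta.
      assert (hc4 : 4 * B = c * ((1 + a) / 2)) by (unfold c; field; lra).
      assert (hrate : psi u * (- div_orbit u - (1 - s u) * (1 + a * s u) / 2)
                      <= psi u * - ((1 + a) / 2)).
      { apply Rmult_le_compat_l; [apply psi_nonneg | apply psi_rate_le, hu]. }
      pose proof (f_cc_mel_le_psi u) as hmel. rewrite hc4 in hmel.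
      pose proof (Rmult_le_compat_l c _ _ hc hrate). nra.
  - pose proof (psi_nonneg t). nra.
Qed.

Lemma RInt_f_cc_mel_left t :
  t <= T0 -> RInt (fun t => f_cc * mel t) t T0 <= 8 * B * chi T0.
Proof.
  intros ht. pose proof B_nonneg as hB0.
  eapply Rle_trans.
  - apply (RInt_le_of_le_derive _ (fun t => 8 * B * chi t)
      (fun t => 8 * B * (chi t * (- div_orbit t + (1 + s t) * (1 + a * s t) / 2))));
      [exact ht | apply continuous_f_cc_mel | |].
    + intros u. apply is_derive_scal, is_derive_chi.
    + intros u hu. cbv beta. pose proof (f_cc_mel_le_chi u).
      assert (chi u * (1 / 2) <= chi u * (- div_orbit u + (1 + s u) * (1 + a * s u) / 2))
        by (apply Rmult_le_compat_l; [apply chi_nonneg | apply chi_rate_ge, hu]).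
      nra.
  - pose proof (chi_nonneg t). nra.
Qed.

End Bound.

Lemma f_cc_mel_integral_pos :
  exists K, is_RInt_gen (fun t => f_cc * mel t) (Rbar_locally m_infty) (Rbar_locally p_infty) K
    /\ 0 < K.
Proof.
  destruct (continuity_ab_maj (fun y => f_cc * f y) (- cc) 0) as [m [hm _]].
  { pose proof cc_pos. lra. }
  { intros y _. apply continuity_pt_mult; [apply continuity_pt_const; intros ? ? |];
      [reflexivity | apply continuity_f]. }
  set (B := f_cc * f m) in hm.
  destruct (is_RInt_gen_nonneg_of_tails (fun t => f_cc * mel t) T0 0
    (8 * B / (1 + a) * psi 0 + 8 * B * chi T0)) as [K [hK hle]].
  - apply continuous_f_cc_mel.
  - apply f_cc_mel_nonneg.
  - intros t ht. pose proof (RInt_f_cc_mel_right B hm t ht).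
    pose proof (chi_nonneg T0). pose proof (B_nonneg B hm). nra.
  - intros t ht. pose proof (RInt_f_cc_mel_left B hm t ht).
    pose proof (psi_nonneg 0). pose proof (B_nonneg B hm).
    assert (0 <= 8 * B / (1 + a)) by (apply Rdiv_le_0_compat; lra). nra.
  - exists K. split; [exact hK |].
    eapply Rlt_le_trans; [| apply (hle 0 1); lra].
    apply RInt_gt_0; [lra | intros t ht; apply f_cc_mel_pos; lra |].
    intros t _; apply continuous_f_cc_mel.
Qed.

Lemma melnikov_integrand_eq t :
  exp (- RInt (fun u => divF a f 0 (x1 u) (x2 u)) 0 t) *
  (F1 a f 0 (x1 t) (x2 t) * Derive (fun _ => F2 a (x1 t) (x2 t)) 0
   - F2 a (x1 t) (x2 t) * Derive (fun al => F1 a f al (x1 t) (x2 t)) 0) = mel t.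
Proof.
  rewrite Derive_F1_alpha, Derive_F2_alpha.
  rewrite (RInt_ext _ div_orbit) by (intros u _; apply divF_alpha0).
  change (exp (- RInt div_orbit 0 t)) with (phi t). unfold mel, F2, x1, x2. ring.
Qed.

Lemma melnikov_integral_nonzero :
  exists M : R,
    is_RInt_gen
      (fun t =>
         exp (- RInt (fun u => divF a f 0 (x1 u) (x2 u)) 0 t) *
         (F1 a f 0 (x1 t) (x2 t) * Derive (fun _ => F2 a (x1 t) (x2 t)) 0
          - F2 a (x1 t) (x2 t) * Derive (fun al => F1 a f al (x1 t) (x2 t)) 0))
      (Rbar_locally m_infty) (Rbar_locally p_infty) M /\
    M <> 0.
Proof.
  destruct f_cc_mel_integral_pos as [K [hK hpos]].
  assert (hcc : f_cc <> 0) by (apply hnz; pose proof cc_pos; unfold cc in *; lra).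
  exists (/ f_cc * K). split.
  - apply (is_RInt_gen_ext (fun t => scal (/ f_cc) (f_cc * mel t))).
    + apply filter_forall. intros ab t _. cbv beta. rewrite melnikov_integrand_eq.
      change (/ f_cc * (f_cc * mel t) = mel t). field. exact hcc.
    + exact (is_RInt_gen_scal _ (/ f_cc) K hK).
  - apply Rmult_integral_contrapositive_currified.
    + apply Rinv_neq_0_compat, hcc.
    + apply Rgt_not_eq, hpos.
Qed.

End Melnikov.

Theorem theorem5 (a : R) (f : R -> R)
  (ha : -1 < a < 0)
  (hsmooth : smooth f)
  (hodd : forall x1, f (- x1) = - f x1)
  (hnz : forall x1, - (2 * sqrt 3 / 9) <= x1 < 0 -> f x1 <> 0) :
  (* (i) the origin is a saddle fixed point at alpha = 0 *)
  (F1 a f 0 0 0 = 0 /\ F2 a 0 0 = 0 /\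
   exists lam1 lam2 : R,
     jac_eigenvalue a f 0 0 0 lam1 /\ jac_eigenvalue a f 0 0 0 lam2 /\
     lam1 < 0 < lam2 /\
     (forall lam, jac_eigenvalue a f 0 0 0 lam -> lam = lam1 \/ lam = lam2) /\
  (* (iii) saddle quantity sigma0 = lam1 + lam2 is nonzero, indeed negative *)
     lam1 + lam2 <> 0 /\ lam1 + lam2 < 0) /\
  (* (ii) homoclinic orbit x(t) to the origin at alpha = 0, x(0) = (0,-1),
     whose orbit is the alpha loop; (iv) Melnikov integral along it is nonzero *)
  (exists x1 x2 : R -> R,
     (forall t, is_derive x1 t (F1 a f 0 (x1 t) (x2 t))) /\
     (forall t, is_derive x2 t (F2 a (x1 t) (x2 t))) /\
     x1 0 = 0 /\ x2 0 = -1 /\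
     is_lim x1 p_infty 0 /\ is_lim x2 p_infty 0 /\
     is_lim x1 m_infty 0 /\ is_lim x2 m_infty 0 /\
     (forall p1 p2, alpha_loop p1 p2 <-> exists t, x1 t = p1 /\ x2 t = p2) /\
     exists M : R,
       is_RInt_gen
         (fun t =>
            exp (- RInt (fun tau => divF a f 0 (x1 tau) (x2 tau)) 0 t) *
            (F1 a f 0 (x1 t) (x2 t) * Derive (fun al => F2 a (x1 t) (x2 t)) 0
             - F2 a (x1 t) (x2 t) * Derive (fun al => F1 a f al (x1 t) (x2 t)) 0))
         (Rbar_locally m_infty) (Rbar_locally p_infty) M /\
       M <> 0).
Proof.
  split.
  - split; [unfold F1; ring |]. split; [unfold F2; ring |].
    exists (a - 1), (a + 1). rewrite !jac_eigenvalue_origin.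
    split; [ring |]. split; [ring |]. split; [lra |].
    split; [| split; lra].
    intros lam hlam%jac_eigenvalue_origin.
    destruct (Rmult_integral _ _ hlam); [left | right]; lra.
  - exists (x1 a ha), (x2 a ha).
    split; [intros t; apply is_derive_x1 |]. split; [intros t; apply is_derive_x2 |].
    split; [apply x1_0 |]. split; [apply x2_0 |].
    split; [apply is_lim_x1_p_infty |]. split; [apply is_lim_x2_p_infty |].
    split; [apply is_lim_x1_m_infty |]. split; [apply is_lim_x2_m_infty |].
    split; [apply alpha_loop_orbit |].
    exact (melnikov_integral_nonzero a f ha hsmooth hodd hnz).
Qed.
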